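(* Every finite graph is isomorphic to an induced subgraph of the dual enhanced power graph of some finite group, and this group can be taken to be cyclic.
   Context: The dual enhanced power graph $\mathrm{DEP}(G)$ of a group $G$ has vertex set $G\setminus\{1\}$, with distinct $x,y$ adjacent iff $\langle x\rangle\cap\langle y\rangle\ne\{1\}$. *)

From mathcomp Require Import all_boot all_fingroup all_solvable.
Set Implicit Arguments. Unset Strict Implicit. Unset Printing Implicit Defensive.
Import GroupScope.
Local Open Scope group_scope.

Definition dep_adj (gT : finGroupType) (G : {set gT}) (x y : gT) : bool :=
  [&& x \in G^#, y \in G^#, x != y & <[x]> :&: <[y]> != 1].

Definition simple_graph (V : finType) (e : rel V) : Prop :=
  symmetric e /\ irreflexive e.

From mathcomp Require Import all_boot all_fingroup all_solvable zmodp.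
Set Implicit Arguments.
Unset Strict Implicit.
Unset Printing Implicit Defensive.
Import GroupScope.

(* Give every unordered pair {u, w} of vertices its own prime p_uw and label
   the vertex v by the product d(v) of the p_vw over its closed neighbourhood;
   the factor p_vv makes d injective and d(v) > 1.  Distinct vertices u, v
   then have labels sharing a prime iff uv is an edge.  In a cyclic group of
   order a multiple of every d(v), send v to the element of order d(v): the
   cyclic subgroups generated by two such elements meet in the subgroup of
   order gcd(d(u), d(v)), which is nontrivial exactly for the edges. *)

Section CyclicDivisorElements.

Variables (gT : finGroupType) (g : gT).

Lemma order_expg_div d : d %| #[g] -> #[g ^+ (#[g] %/ d)] = d.
Proof. by move=> dv_d; rewrite orderXdiv ?dvdn_div // divnA // mulKn. Qed.

Lemma mem_cycle_expg_div c d : c %| d -> d %| #[g] ->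
  g ^+ (#[g] %/ c) \in <[g ^+ (#[g] %/ d)]>.
Proof.
move=> /dvdnP[k def_d] /dvdnP[m def_g]; apply/cycleP; exists k; rewrite -expgM.
have /andP[m_gt0 d_gt0] : (0 < m) && (0 < d) by rewrite -muln_gt0 -def_g order_gt0.
have c_gt0 : 0 < c by move: d_gt0; rewrite def_d muln_gt0 => /andP[].
by rewrite def_g mulnK // def_d mulnA mulnK.
Qed.

Lemma cycle_expg_div_meet d1 d2 : d1 %| #[g] -> d2 %| #[g] ->
  (<[g ^+ (#[g] %/ d1)]> :&: <[g ^+ (#[g] %/ d2)]> != 1) = (1 < gcdn d1 d2).
Proof.
move=> dv_d1 dv_d2; have d1_gt0 := dvdn_gt0 (order_gt0 g) dv_d1.
apply/idP/idP.
  case/trivgPn => y /setIP[y1 y2] y_ne1.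
  have: #[y] %| gcdn d1 d2.
    by rewrite dvdn_gcd -(order_expg_div dv_d1) -(order_expg_div dv_d2) !order_dvdG.
  move/dvdn_leq; rewrite gcdn_gt0 d1_gt0 => /(_ isT); apply: leq_trans.
  by rewrite ltn_neqAle order_gt0 andbT eq_sym order_eq1.
move=> gcd_gt1; have dv_gcd := dvdn_trans (dvdn_gcdl d1 d2) dv_d1.
apply/trivgPn; exists (g ^+ (#[g] %/ gcdn d1 d2)).
  by rewrite inE !mem_cycle_expg_div ?dvdn_gcdl ?dvdn_gcdr.
by rewrite -order_eq1 order_expg_div // gtn_eqF.
Qed.

End CyclicDivisorElements.

Fixpoint nth_prime k := if k is k'.+1 then sval (prime_above (nth_prime k')) else 2.

Lemma nth_prime_prime k : prime (nth_prime k).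
Proof. by case: k => [|k] //=; case: prime_above. Qed.

Lemma ltn_nth_prime k : nth_prime k < nth_prime k.+1.
Proof. by rewrite /=; case: prime_above. Qed.

Lemma nth_prime_inj : injective nth_prime.
Proof. exact/incn_inj/leq_mono/(homo_ltn ltn_trans ltn_nth_prime). Qed.

Section NeighbourhoodLabels.

Variables (V : finType) (e : rel V).

Definition pair_prime (u w : V) := nth_prime (enum_rank [set u; w]).

Definition nbhd_label (v : V) := (\prod_(w | (w == v) || e v w) pair_prime v w)%N.

Lemma pair_prime_prime u w : prime (pair_prime u w).
Proof. exact: nth_prime_prime. Qed.

Lemma pair_primeC u w : pair_prime u w = pair_prime w u.
Proof. by rewrite /pair_prime setUC. Qed.

Lemma pair_prime_inj u w u' w' :
  pair_prime u w = pair_prime u' w' -> [set u; w] = [set u'; w'].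
Proof. by move/nth_prime_inj/val_inj/enum_rank_inj. Qed.

Lemma prime_dvd_nbhd_label p v : prime p ->
  (p %| nbhd_label v) = [exists w, ((w == v) || e v w) && (p == pair_prime v w)].
Proof.
move=> p_pr; rewrite Euclid_dvd_prod // big_orE.
by apply: eq_existsb => w; rewrite dvdn_prime2 ?pair_prime_prime.
Qed.

Lemma nbhd_label_gt0 v : 0 < nbhd_label v.
Proof. by apply: prodn_gt0 => w; rewrite prime_gt0 ?pair_prime_prime. Qed.

Lemma pair_prime_self_dvd v : pair_prime v v %| nbhd_label v.
Proof.
rewrite prime_dvd_nbhd_label ?pair_prime_prime //.
by apply/existsP; exists v; rewrite !eqxx.
Qed.

Lemma nbhd_label_gt1 v : 1 < nbhd_label v.
Proof.
apply: leq_trans (prime_gt1 (pair_prime_prime v v)) _.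
exact: dvdn_leq (nbhd_label_gt0 v) (pair_prime_self_dvd v).
Qed.

Lemma nbhd_label_inj : injective nbhd_label.
Proof.
move=> u v eq_uv; have := pair_prime_self_dvd u.
rewrite eq_uv prime_dvd_nbhd_label ?pair_prime_prime //.
case/existsP => w /andP[_ /eqP/pair_prime_inj eq_pairs].
by have := setU11 v [set w]; rewrite -eq_pairs !inE orbb => /eqP.
Qed.

Hypothesis e_sym : symmetric e.

Lemma gcdn_nbhd_label_gt1 u v :
  u != v -> (1 < gcdn (nbhd_label u) (nbhd_label v)) = e u v.
Proof.
move=> neq_uv; apply/idP/idP => [gcd_gt1 | e_uv].
  have := pdiv_dvd (gcdn (nbhd_label u) (nbhd_label v)).
  rewrite dvdn_gcd !prime_dvd_nbhd_label ?pdiv_prime //.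
  case/andP => /existsP[w1 /andP[nb_w1 /eqP->]] /existsP[w2 /andP[_ /eqP]].
  move/pair_prime_inj => eq_pairs; have: v \in [set u; w1] by rewrite eq_pairs setU11.
  rewrite !inE eq_sym (negbTE neq_uv) /= => /eqP eq_w1; subst w1.
  by rewrite eq_sym (negbTE neq_uv) in nb_w1.
have dv_gcd : pair_prime u v %| gcdn (nbhd_label u) (nbhd_label v).
  rewrite dvdn_gcd !prime_dvd_nbhd_label ?pair_prime_prime //.
  apply/andP; split; apply/existsP.
    by exists v; rewrite e_uv orbT eqxx.
  by exists u; rewrite e_sym e_uv orbT pair_primeC eqxx.
apply: leq_trans (prime_gt1 (pair_prime_prime u v)) (dvdn_leq _ dv_gcd).
by rewrite gcdn_gt0 nbhd_label_gt0.
Qed.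

End NeighbourhoodLabels.

Theorem mainTheorem11 (V : finType) (e : rel V) :
  simple_graph e ->
  exists (gT : finGroupType) (G : {group gT}),
    cyclic G /\
    exists f : V -> gT,
      [/\ injective f,
          (forall v, f v \in (G^#)%g) &
          (forall u v, e u v = dep_adj G (f u) (f v))].
Proof.
case=> e_sym e_irr; set d := nbhd_label e.
pose N := (\prod_(v : V) d v)%N.
have N_gt0 : 0 < N by apply: prodn_gt0 => v; apply: nbhd_label_gt0.
pose g : 'I_N.-1.+1 := Zp1.
have dv_d v : d v %| #[g] by rewrite order_Zp1 prednK // /N (bigD1 v) //= dvdn_mulr.
pose f v := g ^+ (#[g] %/ d v).
have f_ne1 v : f v != 1 by rewrite -order_eq1 order_expg_div // gtn_eqF ?nbhd_label_gt1.
have f_inj : injective f.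
  move=> u v /(congr1 (fun x => #[x])); rewrite !order_expg_div //.
  exact: nbhd_label_inj.
exists _, <[g]>%G; split; first exact: cycle_cyclic.
exists f; split=> // [v | u v]; first by rewrite !inE f_ne1 mem_cycle.
rewrite /dep_adj !inE !f_ne1 !mem_cycle /= (inj_eq f_inj).
have [<-|neq_uv] := eqVneq u v; first by rewrite e_irr.
by rewrite cycle_expg_div_meet // gcdn_nbhd_label_gt1.
Qed.
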